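(* Let $K$ be a simplicial complex in $\mathbb{R}^N$ and let $U\subset\mathbb{R}^N$ be a convex subset. Then the subcomplex $K\cap U$ is nice.
   Context: A simplicial complex is a locally finite set of linear simplices in $\mathbb{R}^N$ closed under faces with pairwise intersections common faces. $K\cap U$ is the maximal subcomplex of $K$ whose simplices are all contained in $U$. For a subcomplex $K'$ and $\Delta\in K$, $\Delta\cap K'$ denotes the set of simplices of $K'$ that are faces of $\Delta$. Two simplices are adjacent if they share a face; $\operatorname{star}(K')$ is the set of simplices adjacent to some simplex of $K'$ with their faces. $K'$ is nice if for every $\Delta\in\operatorname{star}(K')$, $\Delta\cap K'$ is a single face of $\Delta$ (together with its faces). *)

From HB Require Import structures.
From mathcomp Require Import all_boot all_order all_algebra.
From mathcomp Require Import finmap.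
From mathcomp Require Import all_classical all_reals all_analysis.
Set Implicit Arguments. Unset Strict Implicit. Unset Printing Implicit Defensive.
Import Order.TTheory GRing.Theory Num.Theory.
Import numFieldNormedType.Exports.
Local Open Scope classical_set_scope.
Local Open Scope ring_scope.

(* Points of R^N are row vectors 'rV[R]_N.  A (linear) simplex is represented
   by its finite, nonempty, affinely independent set of vertices. *)
Section Simplicial.
Variables (R : realType) (N : nat).
Notation pt := 'rV[R]_N.
Notation simplex := {fset pt}.

Definition affinely_independent (S : simplex) : Prop :=
  forall c : pt -> R,
    \sum_(v <- S) c v = 0 -> \sum_(v <- S) c v *: v = 0 ->
    forall v, v \in S -> c v = 0.

Definition is_simplex (S : simplex) : Prop :=
  S != fset0 /\ affinely_independent S.

Definition conv (S : simplex) : set pt :=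
  [set x | exists c : pt -> R,
     (forall v, v \in S -> 0 <= c v) /\ \sum_(v <- S) c v = 1 /\
     x = \sum_(v <- S) c v *: v].

Definition face (F D : simplex) : Prop := F != fset0 /\ fsubset F D.

Definition closed_under_faces (K : set simplex) : Prop :=
  forall D F, K D -> face F D -> K F.

Definition locally_finite (K : set simplex) : Prop :=
  forall x : pt, exists V : set pt, nbhs x V /\
    finite_set [set D | K D /\ conv D `&` V !=set0].

Definition simplicial_complex (K : set simplex) : Prop :=
  [/\ forall D, K D -> is_simplex D,
      closed_under_faces K,
      (forall D E, K D -> K E ->
         conv D `&` conv E = set0 \/
         exists F, face F D /\ face F E /\ conv D `&` conv E = conv F)
    & locally_finite K].

Definition convex (U : set pt) : Prop :=
  forall x y (t : R), U x -> U y -> 0 <= t -> t <= 1 ->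
    U ((1 - t) *: x + t *: y).

(* K ∩ U : the maximal subcomplex of K whose simplices lie in U, i.e. the
   set of all simplices of K contained in U (this set is closed under faces) *)
Definition complex_cap (K : set simplex) (U : set pt) : set simplex :=
  [set D | K D /\ conv D `<=` U].

Definition simplex_cap (D : simplex) (K' : set simplex) : set simplex :=
  [set G | K' G /\ face G D].

Definition adjacent (K : set simplex) (D E : simplex) : Prop :=
  exists F, K F /\ face F D /\ face F E.

Definition star (K K' : set simplex) : set simplex :=
  [set D | exists D', K D' /\ face D D' /\
             exists E, K' E /\ adjacent K D' E].

(* K' is nice: for every Δ ∈ star(K'), Δ ∩ K' consists of a single face F
   of Δ together with its faces (F = ∅ allowed, giving Δ ∩ K' = ∅). *)
Definition nice (K K' : set simplex) : Prop :=
  forall D, star K K' D ->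
    exists F : simplex, fsubset F D /\
      simplex_cap D K' = [set G | face G F].

End Simplicial.

From Pilot Require Import Defs.
From HB Require Import structures.
From mathcomp Require Import all_boot all_order all_algebra.
From mathcomp Require Import finmap.
From mathcomp Require Import all_classical all_reals all_analysis.
Set Implicit Arguments. Unset Strict Implicit. Unset Printing Implicit Defensive.
Import Order.TTheory GRing.Theory Num.Theory.
Local Open Scope classical_set_scope.
Local Open Scope ring_scope.

(* A simplex lies in a convex set exactly when its vertices do.  Hence, for
   any simplex D of K, the simplices of K ∩ U that are faces of D are exactly
   the faces of the set F of vertices of D lying in U; of the axioms of a
   simplicial complex only closure under faces is needed. *)

Lemma psumr_scale_eq0 (R : numDomainType) (V : lmodType R) (s : seq V)
    (c : V -> R) :
  (forall v, v \in s -> 0 <= c v) -> \sum_(v <- s) c v = 0 ->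
  \sum_(v <- s) c v *: v = 0.
Proof.
rewrite big_seq => c_ge0 /eqP; rewrite psumr_eq0 // => /allP c_eq0.
rewrite big1_seq // => v /andP[_ vs].
by have /implyP/(_ vs)/eqP -> := c_eq0 v vs; rewrite scale0r.
Qed.

Section ConvexHull.
Variables (R : realType) (N : nat).
Notation pt := 'rV[R]_N.
Implicit Types (U : set pt) (S : {fset pt}).

Lemma convex_comb U (s : seq pt) (c : pt -> R) : convex U ->
  (forall v, v \in s -> U v) -> (forall v, v \in s -> 0 <= c v) ->
  \sum_(v <- s) c v = 1 -> U (\sum_(v <- s) c v *: v).
Proof.
move=> cU; elim: s c => [|v s IH] c sU c_ge0.
  by rewrite big_nil => /eqP; rewrite eq_sym oner_eq0.
have sU' w : w \in s -> U w by move=> ws; apply: sU; rewrite inE ws orbT.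
have c_ge0' w : w \in s -> 0 <= c w by move=> ws; apply: c_ge0; rewrite inE ws orbT.
rewrite !big_cons; set b := \sum_(w <- s) c w => sum1.
have cv : c v = 1 - b by rewrite -sum1 addrK.
have b_ge0 : 0 <= b by rewrite /b big_seq sumr_ge0.
have [b0|b_neq0] := eqVneq b 0.
  by rewrite psumr_scale_eq0 // addr0 cv b0 subr0 scale1r; apply: sU; rewrite inE eqxx.
have b_gt0 : 0 < b by rewrite lt_def b_neq0 b_ge0.
have tailU : U (\sum_(w <- s) (c w / b) *: w).
  apply: IH => // [w ws|]; first by rewrite divr_ge0 ?c_ge0'.
  by rewrite -mulr_suml mulfV.
have -> : \sum_(w <- s) c w *: w = b *: \sum_(w <- s) (c w / b) *: w.
  by rewrite scaler_sumr; apply: eq_bigr => w _; rewrite scalerA mulrCA mulfV ?mulr1.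
rewrite cv; apply: cU => //; first by apply: sU; rewrite inE eqxx.
by rewrite -sum1 lerDr c_ge0 // inE eqxx.
Qed.

(* [Defs.conv] is qualified because mathcomp-analysis exports its own [conv]. *)
Lemma conv_vertex S v : v \in S -> Defs.conv S v.
Proof.
move=> vS; exists (fun w => (w == v)%:R); split; first by move=> w _; rewrite ler0n.
split.
  rewrite (big_fsetD1 v) //= eqxx big1_seq ?addr0 // => w /andP[_].
  by rewrite !inE => /andP[/negbTE -> _].
rewrite (big_fsetD1 v) //= eqxx scale1r big1_seq ?addr0 // => w /andP[_].
by rewrite !inE => /andP[/negbTE -> _]; rewrite scale0r.
Qed.

Lemma conv_sub_convex U S : convex U ->
  Defs.conv S `<=` U <-> (forall v, v \in S -> U v).
Proof.
move=> cU; split=> [SU v vS|SU x [c [c_ge0 [sum1 ->]]]]; first exact/SU/conv_vertex.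
exact: convex_comb.
Qed.

Lemma conv_sub_convex_fsep U D G : convex U -> fsubset G D ->
  Defs.conv G `<=` U <-> fsubset G [fset v in D | `[< U v >]]%fset.
Proof.
move=> cU GD; rewrite conv_sub_convex //; split=> [GU|/fsubsetP GF v vG].
  by apply/fsubsetP => v vG; rewrite !inE (fsubsetP GD) //=; apply/asboolP/GU.
by have := GF v vG; rewrite !inE => /andP[_ /asboolP].
Qed.

End ConvexHull.

Theorem lemma3p11 (R : realType) (N : nat) (K : set {fset 'rV[R]_N})
  (U : set 'rV[R]_N) :
  simplicial_complex K -> convex U -> nice K (complex_cap K U).
Proof.
move=> [_ K_faces _ _] cU D [D' [KD' [DD' _]]].
have KD : K D := K_faces _ _ KD' DD'.
exists [fset v in D | `[< U v >]]%fset; split; first exact: fset_sub.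
apply/seteqP; split=> G.
  by move=> [[_ GU] [G0 GD]]; split; last exact/(conv_sub_convex_fsep cU GD).
move=> [G0 GF]; have GD : fsubset G D := fsubset_trans GF (fset_sub _ _).
split; last by [].
split; first exact: K_faces KD _.
exact/(conv_sub_convex_fsep cU GD).
Qed.
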